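(* Let $N\ge 1$ and consider a multi-threshold neuron whose membrane voltage $V$ is a random variable uniformly distributed on $[0,1]$. Let $V_{th,1},\dots,V_{th,N}$ be thresholds with $V_{th,1}>V_{th,2}>\dots>V_{th,N}>0$ and $\sum_{i=1}^N V_{th,i}\le 1$. Suppose the neuron can fire at most one spike for each threshold, so that $V = \alpha_1 V_{th,1}+\alpha_2 V_{th,2}+\dots+\alpha_N V_{th,N}+r(V)$, where $\alpha_i\in\{0,1\}$ indicates whether a spike is fired at the $i$-th threshold and $r(V)\ge 0$ is the error between $V$ and the output weighted sum of spikes. Then the series of thresholds minimizing the expected error $\mathbb{E}[r(V)]=\int_0^1 r(V)\,dV$ satisfies $V_{th,i+1}=V_{th,i}/2$ for $i=1,\dots,N-1$ and $V_{th,N}=1/2^N$, and the minimal expected error equals $1/2^{N+1}$.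
   Context: Firing rule of the multi-threshold neuron: the thresholds are processed from highest to lowest. Set $R_0=V$; for $i=1,\dots,N$, the neuron fires a spike at threshold $i$ (i.e. $\alpha_i=1$) if $R_{i-1}\ge V_{th,i}$, and otherwise $\alpha_i=0$; then $R_i=R_{i-1}-\alpha_i V_{th,i}$. The error is $r(V)=R_N = V-\sum_{i=1}^N \alpha_i V_{th,i}$. *)

From Stdlib Require Import Reals Lra.
From Coquelicot Require Import Coquelicot.
Open Scope R_scope.

(* Thresholds are a function th : nat -> R; only th 1, ..., th N matter. *)

(* Remainder after processing thresholds 1..n (highest to lowest):
   R_0 = V, alpha_i = 1 iff R_{i-1} >= th i, R_i = R_{i-1} - alpha_i th i. *)
Fixpoint resid (th : nat -> R) (n : nat) (V : R) : R :=
  match n with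
  | O => V
  | S k => let Rk := resid th k V in
           if Rle_dec (th (S k)) Rk then Rk - th (S k) else Rk
  end.

Definition err (N : nat) (th : nat -> R) (V : R) : R := resid th N V.

Definition expected_err (N : nat) (th : nat -> R) : R :=
  RInt (fun V => err N th V) 0 1.

Definition admissible (N : nat) (th : nat -> R) : Prop :=
  (forall i : nat, (1 <= i < N)%nat -> th (S i) < th i) /\
  0 < th N /\
  sum_f 1 N th <= 1.

(* Processing the largest threshold t first, the error is r(V) = r'(V) for V < t and
   r'(V - t) for V >= t, where r' is the error of the remaining thresholds.  Hence
   E(a) := int_0^a r satisfies E(a) = E'(a) for a <= t and E(a) = E'(t) + E'(a - t)
   for a > t.  By induction on the number of thresholds, E(a) >= a^2 / 2^(N+1), with
   equality only for the thresholds a/2, a/4, ..., a/2^N: for a > t we use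
   t^2 + (a - t)^2 >= a^2 / 2, with equality exactly at t = a/2, and the case a <= t
   is strictly worse.  Take a = 1. *)
From Stdlib Require Import Reals Lra Lia.
From Coquelicot Require Import Coquelicot.
Open Scope R_scope.

Definition step (t V : R) : R := if Rle_dec t V then V - t else V.

Lemma step_lt (t V : R) : V < t -> step t V = V.
Proof. intros H. unfold step. destruct (Rle_dec t V); [lra | reflexivity]. Qed.

Lemma step_ge (t V : R) : t <= V -> step t V = V - t.
Proof. intros H. unfold step. destruct (Rle_dec t V); [reflexivity | lra]. Qed.

Lemma resid_S (th : nat -> R) (n : nat) (V : R) :
  resid th (S n) V = resid (fun i => th (S i)) n (step (th 1%nat) V).
Proof.
  revert th V; induction n as [|n IH]; intros th V.
  - reflexivity.
  - change (resid th (S (S n)) V) with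
      (let Rk := resid th (S n) V in
       if Rle_dec (th (S (S n))) Rk then Rk - th (S (S n)) else Rk).
    rewrite IH. reflexivity.
Qed.

Lemma RInt_id (a : R) : RInt (fun V => V) 0 a = a ^ 2 / 2.
Proof.
  assert (H : is_RInt (fun V => V) 0 a (a ^ 2 / 2 - 0 ^ 2 / 2)).
  { apply (is_RInt_derive (fun x => x ^ 2 / 2)).
    - intros x _. auto_derive; [exact I | field].
    - intros x _. apply continuous_id. }
  rewrite (is_RInt_unique _ _ _ _ H). simpl. field.
Qed.

Lemma ex_RInt_id (a : R) : ex_RInt (fun V => V) 0 a.
Proof. apply (ex_RInt_continuous (V := R_CompleteNormedModule)). intros; apply continuous_id. Qed.

Section StepIntegral.

Variables (g : R -> R) (t : R).
Hypothesis t_ge0 : 0 <= t.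
Hypothesis ex_RInt_g : forall x, 0 <= x -> ex_RInt g 0 x.

Let step_below (a : R) : a <= t ->
  forall V, Rmin 0 a < V < Rmax 0 a -> g V = g (step t V).
Proof.
  intros Ha V HV. rewrite step_lt; [reflexivity |].
  assert (Rmax 0 a <= t) by (apply Rmax_lub; lra). lra.
Qed.

Let step_above (a : R) : t < a ->
  forall V, Rmin t a < V < Rmax t a -> scal 1 (g (1 * V + - t)) = g (step t V).
Proof.
  intros Ha V HV. rewrite Rmin_left, Rmax_right in HV by lra.
  rewrite step_ge by lra. rewrite (scal_one (K := R_Ring)). f_equal. ring.
Qed.

Let ex_RInt_g_shift (a : R) : t < a -> ex_RInt g (1 * t + - t) (1 * a + - t).
Proof.
  intros Ha. replace (1 * t + - t) with 0 by ring. apply ex_RInt_g. lra.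
Qed.

Lemma ex_RInt_step_below (a : R) : 0 <= a <= t -> ex_RInt (fun V => g (step t V)) 0 a.
Proof. intros Ha. apply (ex_RInt_ext g); [apply step_below | apply ex_RInt_g]; lra. Qed.

Lemma RInt_step_below (a : R) : 0 <= a <= t -> RInt (fun V => g (step t V)) 0 a = RInt g 0 a.
Proof. intros Ha. symmetry. apply RInt_ext, step_below. lra. Qed.

Lemma ex_RInt_step_above (a : R) : t < a -> ex_RInt (fun V => g (step t V)) t a.
Proof.
  intros Ha. apply (ex_RInt_ext (fun V => scal 1 (g (1 * V + - t)))).
  - apply step_above, Ha.
  - apply (ex_RInt_comp_lin g 1 (- t) t a), ex_RInt_g_shift, Ha.
Qed.

Lemma RInt_step_above (a : R) : t < a -> RInt (fun V => g (step t V)) t a = RInt g 0 (a - t).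
Proof.
  intros Ha. rewrite <- (RInt_ext _ _ _ _ (step_above a Ha)).
  etransitivity; [apply (RInt_comp_lin g 1 (- t) t a), ex_RInt_g_shift, Ha |].
  f_equal; ring.
Qed.

Lemma ex_RInt_step (a : R) : 0 <= a -> ex_RInt (fun V => g (step t V)) 0 a.
Proof.
  intros Ha. destruct (Rle_lt_dec a t) as [Hat | Hta].
  - apply ex_RInt_step_below. lra.
  - apply (ex_RInt_Chasles _ 0 t a).
    + apply ex_RInt_step_below. lra.
    + apply ex_RInt_step_above, Hta.
Qed.

Lemma RInt_step_split (a : R) : t < a ->
  RInt (fun V => g (step t V)) 0 a = RInt g 0 t + RInt g 0 (a - t).
Proof.
  intros Ha. rewrite <- (RInt_Chasles _ 0 t a).
  - rewrite RInt_step_below, RInt_step_above by lra. reflexivity.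
  - apply ex_RInt_step_below. lra.
  - apply ex_RInt_step_above, Ha.
Qed.

End StepIntegral.

Lemma ex_RInt_resid (M : nat) (th : nat -> R) :
  (forall i, (1 <= i <= M)%nat -> 0 <= th i) ->
  forall a, 0 <= a -> ex_RInt (resid th M) 0 a.
Proof.
  revert th; induction M as [|m IH]; intros th Hth a Ha.
  - apply ex_RInt_id.
  - apply (ex_RInt_ext (fun V => resid (fun i => th (S i)) m (step (th 1%nat) V))).
    + intros V _. symmetry. apply resid_S.
    + apply ex_RInt_step; [apply Hth; lia | | exact Ha].
      apply IH. intros i Hi. apply Hth. lia.
Qed.

Section ResidRecursion.

Variables (m : nat) (th : nat -> R).
Hypothesis th_ge0 : forall i, (1 <= i <= S m)%nat -> 0 <= th i.

Let ex_RInt_resid_tail (x : R) : 0 <= x -> ex_RInt (resid (fun i => th (S i)) m) 0 x.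
Proof. apply ex_RInt_resid. intros i Hi. apply th_ge0. lia. Qed.

Let RInt_resid_S_step (a : R) :
  RInt (resid th (S m)) 0 a
  = RInt (fun V => resid (fun i => th (S i)) m (step (th 1%nat) V)) 0 a.
Proof. apply RInt_ext. intros V _. apply resid_S. Qed.

Lemma RInt_resid_S_below (a : R) : 0 <= a <= th 1%nat ->
  RInt (resid th (S m)) 0 a = RInt (resid (fun i => th (S i)) m) 0 a.
Proof.
  intros Ha. rewrite RInt_resid_S_step. apply RInt_step_below; auto.
  apply th_ge0. lia.
Qed.

Lemma RInt_resid_S_above (a : R) : th 1%nat < a ->
  RInt (resid th (S m)) 0 a
  = RInt (resid (fun i => th (S i)) m) 0 (th 1%nat)
    + RInt (resid (fun i => th (S i)) m) 0 (a - th 1%nat).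
Proof.
  intros Ha. rewrite RInt_resid_S_step. apply RInt_step_split; auto.
  apply th_ge0. lia.
Qed.

End ResidRecursion.

Lemma sq_split_ge (a t c : R) : 0 < c -> a ^ 2 / (2 * c) <= t ^ 2 / c + (a - t) ^ 2 / c.
Proof.
  intros Hc.
  replace (t ^ 2 / c + (a - t) ^ 2 / c) with (a ^ 2 / (2 * c) + (2 * t - a) ^ 2 / (2 * c))
    by (field; lra).
  assert (0 <= (2 * t - a) ^ 2 / (2 * c)) by (apply Rdiv_le_0_compat; [apply pow2_ge_0 | lra]).
  lra.
Qed.

Lemma sq_split_eq (a t c : R) : 0 < c ->
  t ^ 2 / c + (a - t) ^ 2 / c = a ^ 2 / (2 * c) -> t = a / 2.
Proof.
  intros Hc Heq.
  assert (Hsq : (2 * t - a) ^ 2 = 0).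
  { apply (Rmult_eq_reg_r (/ (2 * c))); [| apply Rinv_neq_0_compat; lra].
    transitivity (t ^ 2 / c + (a - t) ^ 2 / c - a ^ 2 / (2 * c)); [field; lra | lra]. }
  nra.
Qed.

Lemma RInt_resid_ge (M : nat) (th : nat -> R) :
  (forall i, (1 <= i <= M)%nat -> 0 <= th i) ->
  forall a, 0 <= a -> a ^ 2 / 2 ^ (M + 1) <= RInt (resid th M) 0 a.
Proof.
  revert th; induction M as [|m IH]; intros th Hth a Ha.
  - simpl resid. rewrite RInt_id. simpl. lra.
  - assert (IHs : forall x, 0 <= x ->
                  x ^ 2 / 2 ^ (m + 1) <= RInt (resid (fun i => th (S i)) m) 0 x).
    { apply IH. intros i Hi. apply Hth. lia. }
    assert (Hc : 0 < 2 ^ (m + 1)) by (apply pow_lt; lra).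
    change (2 ^ (S m + 1)) with (2 * 2 ^ (m + 1)).
    destruct (Rle_lt_dec a (th 1%nat)) as [Hat | Hta].
    + rewrite RInt_resid_S_below by (auto; lra).
      eapply Rle_trans; [| apply IHs, Ha].
      apply Rmult_le_compat_l; [nra |]. apply Rinv_le_contravar; lra.
    + rewrite RInt_resid_S_above by auto.
      assert (Ht : 0 <= th 1%nat) by (apply Hth; lia).
      pose proof (IHs (th 1%nat) Ht).
      pose proof (IHs (a - th 1%nat) ltac:(lra)).
      pose proof (sq_split_ge a (th 1%nat) _ Hc).
      lra.
Qed.

Lemma RInt_resid_eq_halving (M : nat) (th : nat -> R) :
  (forall i, (1 <= i <= M)%nat -> 0 <= th i) ->
  forall a, 0 < a -> RInt (resid th M) 0 a = a ^ 2 / 2 ^ (M + 1) ->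
  forall i, (1 <= i <= M)%nat -> th i = a / 2 ^ i.
Proof.
  revert th; induction M as [|m IH]; intros th Hth a Ha Heq i Hi; [lia |].
  assert (Hsh : forall i, (1 <= i <= m)%nat -> 0 <= th (S i)) by (intros; apply Hth; lia).
  assert (Ht : 0 <= th 1%nat) by (apply Hth; lia).
  assert (Hc : 0 < 2 ^ (m + 1)) by (apply pow_lt; lra).
  change (2 ^ (S m + 1)) with (2 * 2 ^ (m + 1)) in Heq.
  destruct (Rle_lt_dec a (th 1%nat)) as [Hat | Hta].
  - exfalso.
    rewrite RInt_resid_S_below in Heq by (auto; lra).
    pose proof (RInt_resid_ge m _ Hsh a ltac:(lra)).
    assert (a ^ 2 / (2 * 2 ^ (m + 1)) < a ^ 2 / 2 ^ (m + 1)).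
    { apply Rmult_lt_compat_l; [nra |]. apply Rinv_lt_contravar; nra. }
    lra.
  - rewrite RInt_resid_S_above in Heq by auto.
    pose proof (RInt_resid_ge m _ Hsh (th 1%nat) Ht) as Lt.
    pose proof (RInt_resid_ge m _ Hsh (a - th 1%nat) ltac:(lra)) as Lat.
    pose proof (sq_split_ge a (th 1%nat) _ Hc).
    assert (Htight : RInt (resid (fun i => th (S i)) m) 0 (th 1%nat)
                     = th 1%nat ^ 2 / 2 ^ (m + 1)) by lra.
    assert (Hhalf : th 1%nat = a / 2) by (apply (sq_split_eq a (th 1%nat) (2 ^ (m + 1))); lra).
    destruct i as [|[|j]]; [lia | rewrite Hhalf; simpl; field |].
    rewrite (IH _ Hsh (th 1%nat) ltac:(lra) Htight (S j)) by lia.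
    rewrite Hhalf. simpl. field. apply pow_nonzero. lra.
Qed.

Lemma RInt_resid_halving (M : nat) (th : nat -> R) (a : R) :
  0 < a -> (forall i, (1 <= i <= M)%nat -> th i = a / 2 ^ i) ->
  RInt (resid th M) 0 a = a ^ 2 / 2 ^ (M + 1).
Proof.
  revert th a; induction M as [|m IH]; intros th a Ha Hth.
  - simpl resid. rewrite RInt_id. simpl. field.
  - assert (Ht : th 1%nat = a / 2) by (rewrite Hth by lia; simpl; field).
    assert (Hsh : forall i, (1 <= i <= m)%nat -> th (S i) = (a / 2) / 2 ^ i).
    { intros i Hi. rewrite Hth by lia. simpl. field. apply pow_nonzero. lra. }
    assert (Hge0 : forall i, (1 <= i <= S m)%nat -> 0 <= th i).
    { intros i Hi. rewrite Hth by exact Hi.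
      apply Rdiv_le_0_compat; [lra | apply pow_lt; lra]. }
    rewrite RInt_resid_S_above by (auto; lra).
    rewrite Ht. replace (a - a / 2) with (a / 2) by field.
    rewrite (IH _ (a / 2)) by (auto; lra).
    change (2 ^ (S m + 1)) with (2 * 2 ^ (m + 1)).
    assert (Hsum : (a / 2) ^ 2 / 2 ^ (m + 1) + (a / 2) ^ 2 / 2 ^ (m + 1)
                   = a ^ 2 / (2 * 2 ^ (m + 1))) by (field; apply pow_nonzero; lra).
    exact Hsum.
Qed.

Lemma sum_f_R0_inv_pow2 (n : nat) :
  sum_f_R0 (fun i => / 2 ^ (i + 1)) n = 1 - / 2 ^ (n + 1).
Proof.
  induction n as [|n IH].
  - simpl. field.
  - simpl sum_f_R0. rewrite IH.
    change (2 ^ (S n + 1)) with (2 * 2 ^ (n + 1)).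
    field. apply pow_nonzero. lra.
Qed.

Lemma admissible_inv_pow2 (N : nat) : (1 <= N)%nat -> admissible N (fun i => / 2 ^ i).
Proof.
  intros hN. split; [| split].
  - intros i _. apply Rinv_lt_contravar.
    + apply Rmult_lt_0_compat; apply pow_lt; lra.
    + simpl. assert (0 < 2 ^ i) by (apply pow_lt; lra). lra.
  - apply Rinv_0_lt_compat, pow_lt; lra.
  - unfold sum_f. rewrite sum_f_R0_inv_pow2.
    replace (N - 1 + 1)%nat with N by lia.
    assert (0 < / 2 ^ N) by (apply Rinv_0_lt_compat, pow_lt; lra). lra.
Qed.

Lemma admissible_ge0 (N : nat) (th : nat -> R) :
  admissible N th -> forall i, (1 <= i <= N)%nat -> 0 <= th i.
Proof.
  intros [Hdec [HN _]] i Hi.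
  remember (N - i)%nat as d eqn:Hd. revert i Hi Hd.
  induction d as [|d IH]; intros i Hi Hd.
  - replace i with N by lia. lra.
  - pose proof (Hdec i ltac:(lia)).
    pose proof (IH (S i) ltac:(lia) ltac:(lia)). lra.
Qed.

Theorem theorem1 (N : nat) (hN : (1 <= N)%nat) :
  (* the thresholds V_{th,i} = 1/2^i are admissible and achieve error 1/2^(N+1) *)
  admissible N (fun i => / 2 ^ i) /\
  expected_err N (fun i => / 2 ^ i) = / 2 ^ (N + 1) /\
  (* every admissible choice has expected error >= 1/2^(N+1), and any minimizer
     satisfies V_{th,i+1} = V_{th,i}/2 and V_{th,N} = 1/2^N *)
  (forall th : nat -> R, admissible N th ->
     expected_err N th >= / 2 ^ (N + 1) /\
     (expected_err N th = / 2 ^ (N + 1) ->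
        (forall i : nat, (1 <= i < N)%nat -> th (S i) = th i / 2) /\
        th N = / 2 ^ N)).
Proof.
  assert (Hone : forall k, 1 ^ 2 / 2 ^ k = / 2 ^ k) by (intros; simpl; field; apply pow_nonzero; lra).
  unfold expected_err, err.
  split; [| split].
  - apply admissible_inv_pow2, hN.
  - rewrite <- Hone. apply RInt_resid_halving; [lra |].
    intros i _. unfold Rdiv. ring.
  - intros th Hadm.
    pose proof (admissible_ge0 N th Hadm) as Hge0.
    split.
    + rewrite <- Hone. apply Rle_ge, RInt_resid_ge; [exact Hge0 | lra].
    + intros Heq. rewrite <- Hone in Heq.
      pose proof (RInt_resid_eq_halving N th Hge0 1 ltac:(lra) Heq) as Hth.
      split.
      * intros i Hi. rewrite !Hth by lia. simpl. field. apply pow_nonzero. lra.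
      * rewrite Hth by lia. field. apply pow_nonzero. lra.
Qed.
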